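(* Let $n\ge 1$ and $N\ge 1$ be integers, and let $Z_1,\dots,Z_n,Y_1,\dots,Y_N$ be independent identically distributed random variables with values in $[0,1]$ and mean $\mu$. Let $\overline Z=\frac1n\sum_{t=1}^n Z_t$ and $\overline X^{n+N}=\frac{n\overline Z+\sum_{t=1}^N Y_t}{n+N}$. Let $a\in\mathbb R$ be a constant and $d>0$. Then $$\Pr\!\left(\overline Z\le a-d\ \text{ and }\ \overline X^{n+N}\ge a\right)\le 2\exp\!\left(-\varphi\, d^2\, n\right)$$ and $$\Pr\!\left(\overline Z\ge a+d\ \text{ and }\ \overline X^{n+N}\le a\right)\le 2\exp\!\left(-\varphi\, d^2\, n\right),$$ where $$\varphi=\min_{r\ge 0}\,2\left(\frac{1+r}{1+\sqrt r}\right)^2=8(\sqrt2-1)^2>1.37 .$$ (In the application, for $i\ne\alpha$: $Z$ are the first $n=n_i$ samples of arm $i$, $a=\overline X_\alpha^{n_\alpha}$ and $d=\overline X_\alpha^{n_\alpha}-\overline X_i^{n_i}$; for arm $\alpha$: $n=n_\alpha$, $a=\overline X_\beta^{n_\beta}$ and $d=\overline X_\alpha^{n_\alpha}-\overline X_\beta^{n_\beta}$.)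
   Context: $\overline X_j^{n_j}$ denotes the sample mean of the first $n_j$ samples of arm $j$; $\alpha$ is the arm with the largest sample mean and $\beta$ the arm with the second largest. The quantity $\overline X^{n+N}$ is the sample mean of an arm after $N$ further samples beyond the first $n$. *)

From HB Require Import structures.
From mathcomp Require Import all_boot all_order all_algebra.
From mathcomp Require Import all_classical all_reals all_analysis.
Set Implicit Arguments. Unset Strict Implicit. Unset Printing Implicit Defensive.
Import Order.TTheory GRing.Theory Num.Theory.
Local Open Scope classical_set_scope.
Local Open Scope ring_scope.

Definition mutually_independent_RVs d (T : measurableType d) (R : realType)
  (P : probability T R) (m : nat) (X : 'I_m -> {RV P >-> R}) : Prop :=
  forall (J : {set 'I_m}) (B : 'I_m -> set R),
    (forall j, measurable (B j)) ->
    P (\bigcap_(j in [set j | j \in J]) (X j @^-1` B j)) =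
    (\prod_(j in J) P (X j @^-1` B j))%E.

Definition identically_distributed_RVs d (T : measurableType d) (R : realType)
  (P : probability T R) (m : nat) (X : 'I_m -> {RV P >-> R}) : Prop :=
  forall (i j : 'I_m) (B : set R), measurable B ->
    P (X i @^-1` B) = P (X j @^-1` B).

Definition varphi (R : realType) : R := 8 * (Num.sqrt 2 - 1) ^+ 2.

From HB Require Import structures.
From mathcomp Require Import all_boot all_order all_algebra.
From mathcomp Require Import all_classical all_reals all_analysis.
From mathcomp Require Import ring lra measurable_realfun.
Import Order.TTheory GRing.Theory Num.Theory.
Import numFieldNormedType.Exports.
Local Open Scope classical_set_scope.
Local Open Scope ring_scope.

(* Both events force the mean of the [Y]'s to exceed (resp. fall below) the
   mean of the [Z]'s by [dd (n + N) / N], because the pooled mean is a convex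
   combination of the two.  A Chernoff bound with Hoeffding's lemma at the
   optimal parameter [4 dd n] bounds this probability by
   [exp (- 2 dd^2 n (n + N) / N) <= exp (- varphi dd^2 n)], as [varphi <= 2].
   Independence is only given as the product rule for events, so the moment
   generating function of the sum is estimated through a discretisation: each variable is rounded down to a grid of mesh [1 / M],
   independence applies to products of grid cells, and the rounding costs a
   factor [exp (2 sum_i |c_i| / M) <= 2] for [M] large.
   Finally [varphi = 8 (sqrt 2 - 1)^2] is the minimum of
   [2 ((1 + s^2) / (1 + s))^2], attained at [s = sqrt 2 - 1], because
   [1 + s^2 - 2 (sqrt 2 - 1) (1 + s) = (s - (sqrt 2 - 1))^2]. *)

Lemma expR_mul_le_chord (R : realType) (x c : R) : 0 <= x <= 1 ->
  expR (c * x) <= 1 - x + x * expR c.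
Proof.
move=> /andP[x0 x1].
have := convex_expR (Itv01 x0 x1) c 0.
by rewrite !convRE /= expR0 mulr0 addr0 mulr1 mulrC addrC.
Qed.

Section Hoeffding_lemma.
Context {R : realType}.
Implicit Types s x z c : R.

Lemma ge0_derive_le (f df : R -> R) (a b : R) :
  (forall x, is_derive x 1 f (df x)) -> (forall x, a <= x <= b -> 0 <= df x) ->
  a <= b -> f a <= f b.
Proof.
move=> fd df0 ab.
have cf : {within `[a, b], continuous f}.
  by apply: derivable_within_continuous => x _; exact: ex_derive.
have [c cab E] := MVT_segment ab (fun x _ => fd x) cf.
by rewrite -subr_ge0 E mulr_ge0 ?subr_ge0 ?df0 -?in_itv.
Qed.

(* [2 + z - (2 - z) e^z] vanishes at 0 and has derivative [1 - (1 - z) e^z >= 0]. *)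
Lemma sub2_expR_sign z : (0 <= z -> (2 - z) * expR z <= 2 + z) /\
                         (z <= 0 -> 2 + z <= (2 - z) * expR z).
Proof.
pose g z := 2 + z - (2 - z) * expR z.
have g0 : g 0 = 0 by rewrite /g expR0; ring.
have gd x : is_derive x 1 g (1 - (1 - x) * expR x).
  by apply: is_derive_eq; rewrite /GRing.scale /=; ring.
have gd0 x : 0 <= 1 - (1 - x) * expR x.
  have : (1 - x) * expR x <= expR (- x) * expR x.
    by apply: ler_wpM2r => //; exact: expR_ge1Dx.
  by rewrite [expR (- x) * _]mulrC expRxMexpNx_1 subr_ge0.
split=> hz.
- by rewrite -subr_ge0 -[_ - _]/(g z) -g0; apply: ge0_derive_le gd _ hz.
- by rewrite -subr_ge0 -opprB -[_ - _]/(g z) oppr_ge0 -g0; apply: ge0_derive_le gd _ hz.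
Qed.

(* [s e^x / (1 - s + s e^x)] is the derivative of the log-mgf of a Bernoulli([s])
   variable. *)
Lemma bernoulli_mgf_slope s x : 0 <= s <= 1 ->
  (0 <= x -> s * expR x <= (1 - s + s * expR x) * (s + x / 4)) /\
  (x <= 0 -> (1 - s + s * expR x) * (s + x / 4) <= s * expR x).
Proof.
move=> /andP[s0 s1].
set v := expR (x / 2); have v0 : 0 < v := expR_gt0 _.
have ev : expR x = v * v by rewrite -expRD; congr expR; field.
pose D := 1 - s + s * (v * v).
have D0 : 0 < D.
  have := mulr_gt0 v0 v0; rewrite /D; have [s_lt1|s_ge1] := ltrP s 1; first nra.
  have -> : s = 1 by lra.
  lra.
pose W := (1 - s - s * v) ^+ 2.
have W0 : 0 <= W := sqr_ge0 _.
(* In terms of [v = e^(x/2)] the gap is a combination of sign-definite terms. *)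
have key : (v + 1) * ((1 - s + s * expR x) * (s + x / 4) - s * expR x) =
    D * ((2 + x / 2 - (2 - x / 2) * v) / 2) + (v - 1) * W.
  by rewrite ev /D /W; field.
have [gp gn] := sub2_expR_sign (x / 2).
split=> hx.
- have v1 : 1 <= v by have := expR_ge1Dx (x / 2); rewrite -/v; lra.
  have g0 : 0 <= 2 + x / 2 - (2 - x / 2) * v by rewrite subr_ge0; apply: gp; lra.
  have : 0 <= (v + 1) * ((1 - s + s * expR x) * (s + x / 4) - s * expR x).
    by rewrite key; apply: addr_ge0; apply: mulr_ge0; lra.
  by rewrite pmulr_rge0 ?subr_ge0 //; lra.
- have v1 : v <= 1 by rewrite /v expR_le1; lra.
  have g0 : 2 + x / 2 - (2 - x / 2) * v <= 0 by rewrite subr_le0; apply: gn; lra.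
  have : (v + 1) * ((1 - s + s * expR x) * (s + x / 4) - s * expR x) <= 0.
    rewrite key; have : D * ((2 + x / 2 - (2 - x / 2) * v) / 2) <= 0.
      by apply: mulr_ge0_le0; lra.
    have : (v - 1) * W <= 0 by apply: mulr_le0_ge0; lra.
    lra.
  by rewrite pmulr_rle0 ?subr_le0 //; lra.
Qed.

Lemma hoeffding_bernoulli s c : 0 <= s <= 1 ->
  1 - s + s * expR c <= expR (c * s + c ^+ 2 / 8).
Proof.
move=> s01.
pose G x := (1 - s + s * expR x) * expR (- (x * s + x ^+ 2 / 8)).
pose dG x := expR (- (x * s + x ^+ 2 / 8)) *
             (s * expR x - (1 - s + s * expR x) * (s + x / 4)).
have Gd x : is_derive x 1 G (dG x).
  by apply: is_derive_eq; rewrite /dG /GRing.scale /=; field.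
have G0 : G 0 = 1.
  by rewrite /G expR0 mulr1 subrK mul1r -[RHS]expR0; congr expR; ring.
suff : G c <= 1 by rewrite /G expRN ler_pdivrMr ?expR_gt0 // mul1r.
(* [G] increases on [x <= 0] and decreases on [x >= 0]. *)
rewrite -G0; have [c0|c0] := lerP 0 c.
- rewrite -lerN2; apply: (ge0_derive_le (- G) (fun x => - dG x)) c0.
  move=> x /andP[x0 _]; rewrite oppr_ge0 mulr_ge0_le0 ?expR_ge0 // subr_le0.
  exact: (bernoulli_mgf_slope s x s01).1 x0.
- apply: (ge0_derive_le G dG) (ltW c0) => // x /andP[_ x0].
  rewrite mulr_ge0 ?expR_ge0 // subr_ge0.
  exact: (bernoulli_mgf_slope s x s01).2 x0.
Qed.

End Hoeffding_lemma.

Section Varphi.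
Variable R : realType.
Let q : R := Num.sqrt 2.
Let q_ge0 : 0 <= q. Proof. exact: sqrtr_ge0. Qed.
Let qq : q * q = 2. Proof. by rewrite -expr2 sqr_sqrtr. Qed.
Let q_gt : 1414 / 1000 < q.
Proof. by rewrite ltNge; apply/negP => h; move: q_ge0 qq; nra. Qed.

Lemma varphi_le2 : varphi R <= 2.
Proof. by rewrite /varphi -/q; move: q_ge0 qq q_gt; nra. Qed.

Lemma varphi_gt137 : 137 / 100 < varphi R.
Proof. by rewrite /varphi -/q; move: q_ge0 qq q_gt; nra. Qed.

Lemma varphi_le_ratio (r : R) : 0 <= r ->
  varphi R <= 2 * ((1 + r) / (1 + Num.sqrt r)) ^+ 2.
Proof.
move=> r0; rewrite /varphi -/q; move: q_ge0 qq q_gt => q0 q2 q_gt'.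
set s := Num.sqrt r; have s0 : 0 <= s := sqrtr_ge0 r.
have ss : s * s = r by rewrite -expr2 sqr_sqrtr.
have h : 2 * (q - 1) <= (1 + r) / (1 + s).
  rewrite ler_pdivlMr; last lra.
  rewrite -subr_ge0 -ss.
  have -> : 1 + s * s - 2 * (q - 1) * (1 + s) = (s - (q - 1)) ^+ 2 + (2 - q * q) by ring.
  by rewrite q2 subrr addr0 sqr_ge0.
have : 0 <= 2 * (q - 1) by lra.
nra.
Qed.

Lemma varphi_ratio_attained :
  exists2 r : R, 0 <= r & varphi R = 2 * ((1 + r) / (1 + Num.sqrt r)) ^+ 2.
Proof.
exists ((q - 1) ^+ 2); first exact: sqr_ge0.
move: q_ge0 qq q_gt => q0 q2 q_gt'.
rewrite /varphi -/q sqrtr_sqr ger0_norm; last lra.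
have -> : 1 + (q - 1) ^+ 2 = q * (2 * (q - 1)) by nra.
by field; rewrite addrC subrK lt0r_neq0 //; lra.
Qed.

End Varphi.

Section Grid.
Variables (R : realType) (M : nat).
Hypothesis M_gt0 : (0 < M)%N.

Definition grid (j : 'I_M.+1) : R := j%:R / M%:R.
Definition cell (j : 'I_M.+1) : set R := `[grid j, grid j + M%:R^-1[%classic.
Definition cell_of (x : R) : 'I_M.+1 := inord (Num.truncn (x * M%:R)).

Let M_pos : 0 < (M%:R : R). Proof. by rewrite ltr0n. Qed.

Let cellE (j : nat) (x : R) :
  (j%:R / M%:R <= x < j%:R / M%:R + M%:R^-1) = (j%:R <= x * M%:R < j.+1%:R).
Proof.
rewrite -[j.+1]addn1 natrD -[X in _ + X](mul1r (M%:R^-1)) -mulrDl.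
by rewrite !ler_pdivrMr // ltr_pdivlMr.
Qed.

(* [inord] sends out-of-range indices to [0]; [x <= 1] keeps [x * M] in range. *)
Let cell_ofE (x : R) : 0 <= x <= 1 -> (cell_of x : nat) = Num.truncn (x * M%:R).
Proof.
move=> /andP[x0 x1]; rewrite /cell_of inordK // ltnS truncn_le_nat.
have : x * M%:R <= M%:R by rewrite ler_piMl // ltW.
rewrite -[M.+1]addn1 natrD; lra.
Qed.

Lemma cell_ofP (x : R) : 0 <= x <= 1 -> cell (cell_of x) x.
Proof.
move=> x01; rewrite /cell /grid /= in_itv /= cell_ofE // cellE.
by apply: truncn_itv; rewrite mulr_ge0 //; case/andP: x01.
Qed.

Lemma cell_of_uniq (x : R) (j : 'I_M.+1) : 0 <= x <= 1 -> cell j x -> j = cell_of x.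
Proof.
move=> x01; rewrite /cell /grid /= in_itv /= cellE => xj.
by apply: val_inj; rewrite /= cell_ofE //; apply/esym/truncn_def.
Qed.

Lemma grid_ge0 (j : 'I_M.+1) : 0 <= grid j.
Proof. by rewrite /grid divr_ge0. Qed.

Lemma grid_le1 (j : 'I_M.+1) : grid j <= 1.
Proof. by rewrite /grid ler_pdivrMr // mul1r ler_nat -ltnS. Qed.

Lemma cell_grid_itv (x : R) (j : 'I_M.+1) : cell j x -> grid j <= x <= grid j + M%:R^-1.
Proof. by rewrite /cell /= in_itv /= => /andP[-> /ltW ->]. Qed.

Lemma sum_indic_cell (a : 'I_M.+1 -> R) (x : R) : 0 <= x <= 1 ->
  \sum_j a j * \1_(cell j) x = a (cell_of x).
Proof.
move=> x01; rewrite (bigD1 (cell_of x)) //= big1 => [|j /negbTE jx].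
  by rewrite indicE mem_set ?mulr1 ?addr0 //; exact: cell_ofP.
by rewrite indicE memNset ?mulr0 // => /(cell_of_uniq _ _ x01)/eqP; rewrite jx.
Qed.

Lemma measurable_cell j : measurable (cell j).
Proof. exact: measurable_itv. Qed.

End Grid.
Arguments grid {R} M j.
Arguments cell {R} M j.
Arguments cell_of {R} M x.
Arguments cell_ofP {R M} M_gt0 {x}.
Arguments grid_ge0 {R M} j.
Arguments grid_le1 {R M} M_gt0 j.
Arguments cell_grid_itv {R M x j}.
Arguments sum_indic_cell {R M} M_gt0 a {x}.
Arguments measurable_cell {R} M j.

Lemma ler_mul_add_abs {R : realFieldType} (c x y e : R) : 0 <= e -> x <= y <= x + e ->
  c * y <= c * x + `|c| * e.
Proof.
move=> e0 /andP[xy yxe]; have [c0|c0] := lerP 0 c.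
- by rewrite ger0_norm // -mulrDr; apply: ler_wpM2l.
- rewrite ltr0_norm //; have : c * y <= c * x by rewrite ler_wnM2l // ltW.
  have : 0 <= - c * e by rewrite mulr_ge0 // oppr_ge0 ltW.
  lra.
Qed.

Lemma expR_le2 (R : realType) (x : R) : x <= 1 / 2 -> expR x <= 2.
Proof.
move=> x_le; have := expRxMexpNx_1 x; have := expR_ge1Dx (- x); have := expR_gt0 x.
by nra.
Qed.

Lemma pooled_mean_gap {R : realFieldType} {n N z y a dd : R} : 0 < n -> 0 < N ->
  z <= a - dd -> a <= (n * z + N * y) / (n + N) -> dd * (n + N) / N <= y - z.
Proof.
move=> n0 N0 hz; rewrite ler_pdivlMr ?addr_gt0 // => ha.
by rewrite ler_pdivrMr //; nra.
Qed.

Lemma sum_ffun_expR_prod {R : realType} {m K : nat} (f q : 'I_m -> 'I_K -> R) (t : R) :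
  \sum_(k : {ffun 'I_m -> 'I_K}) expR (\sum_i f i (k i) - t) * \prod_i q i (k i) =
  expR (- t) * \prod_i \sum_j q i j * expR (f i j).
Proof.
rewrite bigA_distr_bigA mulr_sumr; apply: eq_bigr => k _.
rewrite addrC expRD expR_sum -mulrA -big_split /=.
by congr (_ * _); apply: eq_bigr => i _; rewrite mulrC.
Qed.

Section Step_functions.
Context {d : measure_display} {T : measurableType d} {R : realType}.
Variable nu : {measure set T -> \bar R}.

Lemma measurable_sum_indic {I : finType} (w : I -> R) (S : I -> set T) :
  (forall k, measurable (S k)) ->
  measurable_fun [set: T] (fun x => (\sum_k w k * \1_(S k) x)%:E).
Proof.
move=> mS; apply/measurable_EFinP; apply: measurable_sum => k.
by apply: measurable_funM => //; exact: measurable_indic.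
Qed.

Lemma integral_sum_indic {I : finType} (w : I -> R) (S : I -> set T) :
  (forall k, 0 <= w k) -> (forall k, measurable (S k)) ->
  (\int[nu]_x (\sum_k w k * \1_(S k) x)%:E = \sum_k (w k)%:E * nu (S k))%E.
Proof.
move=> w0 mS; under eq_integral do rewrite -sumEFin.
rewrite ge0_integral_sum //; last 2 first.
- by move=> k; apply/measurable_EFinP; apply: measurable_funM => //; exact: measurable_indic.
- by move=> k x _; rewrite lee_fin mulr_ge0.
apply: eq_bigr => k _; under eq_integral do rewrite EFinM.
rewrite ge0_integralZl_EFin ?integral_indic ?setIT //.
by apply/measurable_EFinP; exact: measurable_indic.
Qed.

End Step_functions.

Section Discretisation.
Context {d : measure_display} {T : measurableType d} {R : realType} (P : probability T R).

Section Cell_law.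
Variables (X : {RV P >-> R}) (mu : R) (M : nat).
Hypotheses (M_gt0 : (0 < M)%N) (X01 : forall w, 0 <= X w <= 1).
Hypothesis EX : ('E_P[X] = mu%:E)%E.

Definition cell_prob (j : 'I_M.+1) : R := fine (P (X @^-1` cell M j)).

Lemma measurable_cell_preimage j : measurable (X @^-1` cell M j).
Proof. by apply: measurable_funPTI; exact: measurable_cell. Qed.

Lemma cell_probE j : P (X @^-1` cell M j) = (cell_prob j)%:E.
Proof. by rewrite fineK // fin_num_measure //; exact: measurable_cell_preimage. Qed.

Lemma cell_prob_ge0 j : 0 <= cell_prob j.
Proof. by rewrite fine_ge0 // measure_ge0. Qed.

Let integral_cell_step (a : 'I_M.+1 -> R) : (forall j, 0 <= a j) ->
  (\int[P]_x (a (cell_of M (X x)))%:E = (\sum_j a j * cell_prob j)%:E)%E.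
Proof.
move=> a0; under eq_integral => x _ do rewrite -(sum_indic_cell M_gt0 a (X01 x)).
rewrite (integral_sum_indic P a (fun j => X @^-1` cell M j)) //; last first.
  exact: measurable_cell_preimage.
by rewrite -sumEFin; apply: eq_bigr => j _ /=; rewrite cell_probE EFinM.
Qed.

Let measurable_cell_step (a : 'I_M.+1 -> R) :
  measurable_fun [set: T] (fun x => (a (cell_of M (X x)))%:E).
Proof.
under eq_fun => x do rewrite -(sum_indic_cell M_gt0 a (X01 x)).
exact: measurable_sum_indic measurable_cell_preimage.
Qed.

Lemma sum_cell_prob : \sum_j cell_prob j = 1.
Proof.
have := integral_cell_step (fun=> 1) (fun=> ler01).
rewrite integral_cst // mul1e => P1.
have := probability_setT P; rewrite P1 => -[<-].
by under eq_bigr do rewrite mul1r.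
Qed.

Let grid_cell_X x : grid M (cell_of M (X x)) <= X x <= grid M (cell_of M (X x)) + M%:R^-1.
Proof. exact: cell_grid_itv (cell_ofP M_gt0 (X01 x)). Qed.

Lemma sum_cell_prob_grid_le : \sum_j cell_prob j * grid M j <= mu.
Proof.
rewrite -lee_fin -EX expectation_def.
under eq_bigr do rewrite mulrC.
rewrite -integral_cell_step; last by move=> j; exact: grid_ge0.
apply: ge0_le_integral => //.
- by move=> x _; rewrite lee_fin grid_ge0.
- by apply/measurable_EFinP; exact: measurable_funPT.
- by move=> x _; rewrite lee_fin; case/andP: (grid_cell_X x).
Qed.

Lemma mean_le_sum_cell_prob_grid : mu <= \sum_j cell_prob j * grid M j + M%:R^-1.
Proof.
have -> : \sum_j cell_prob j * grid M j + M%:R^-1 =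
    \sum_j (grid M j + M%:R^-1) * cell_prob j.
  rewrite -[X in _ + X]mulr1 -sum_cell_prob mulr_sumr -big_split /=.
  by apply: eq_bigr => j _; ring.
rewrite -lee_fin -EX expectation_def -integral_cell_step; last first.
  by move=> j; rewrite addr_ge0 ?grid_ge0 ?invr_ge0.
apply: ge0_le_integral => //.
- by move=> x _; rewrite lee_fin; case/andP: (X01 x).
- by apply/measurable_EFinP; exact: measurable_funPT.
- exact: (measurable_cell_step (fun j => grid M j + M%:R^-1)).
- by move=> x _; rewrite lee_fin; case/andP: (grid_cell_X x).
Qed.

(* Convexity bounds the discretised mgf by that of a Bernoulli variable with
   the same mean [s], to which Hoeffding's lemma applies. *)
Lemma cell_mgf_le (c : R) :
  \sum_j cell_prob j * expR (c * grid M j) <= expR (c * mu + c ^+ 2 / 8 + `|c| / M%:R).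
Proof.
set s := \sum_j cell_prob j * grid M j.
have s0 : 0 <= s by apply: sumr_ge0 => j _; rewrite mulr_ge0 ?cell_prob_ge0 ?grid_ge0.
have s1 : s <= 1.
  rewrite -sum_cell_prob; apply: ler_sum => j _.
  by rewrite ler_piMr ?cell_prob_ge0 ?(grid_le1 M_gt0).
have chord : \sum_j cell_prob j * expR (c * grid M j) <= 1 - s + s * expR c.
  have -> : 1 - s + s * expR c = \sum_j cell_prob j * (1 - grid M j + grid M j * expR c).
    rewrite -[in LHS]sum_cell_prob /s mulr_suml -sumrB -big_split /=.
    by apply: eq_bigr => j _; ring.
  apply: ler_sum => j _; rewrite ler_wpM2l ?cell_prob_ge0 //.
  by apply: expR_mul_le_chord; rewrite grid_ge0 (grid_le1 M_gt0).
apply: (le_trans chord); apply: (le_trans (hoeffding_bernoulli s c _)); first by rewrite s0 s1.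
have : - c * mu <= - c * s + `|- c| * M%:R^-1.
  apply: ler_mul_add_abs; first by rewrite invr_ge0.
  by rewrite sum_cell_prob_grid_le mean_le_sum_cell_prob_grid.
by rewrite normrN ler_expR; lra.
Qed.

End Cell_law.

Section Chernoff.
Variables (m : nat) (X : 'I_m -> {RV P >-> R}) (mu : R).
Hypotheses (indep : mutually_independent_RVs X) (X01 : forall i w, 0 <= X i w <= 1).
Hypothesis EX : forall i, ('E_P[X i] = mu%:E)%E.

Definition cell_box (M : nat) (k : {ffun 'I_m -> 'I_M.+1}) : set T :=
  \bigcap_(i in [set i | i \in [set: 'I_m]%SET]) (X i @^-1` cell M (k i)).

Lemma measurable_cell_box M k : measurable (cell_box M k).
Proof.
apply: fin_bigcap_measurable; first exact: finite_finset.
by move=> i _; exact: measurable_cell_preimage.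
Qed.

Lemma prob_cell_box M k : P (cell_box M k) = (\prod_i cell_prob (X i) M (k i))%:E.
Proof.
rewrite /cell_box indep; last by move=> i; exact: measurable_cell.
rewrite -prodEFin; apply: eq_big => [i|i _]; first by rewrite inE.
exact: cell_probE.
Qed.

(* Every point of [A] lies in a box whose weight is at least [1]. *)
Lemma prob_le_sum_cell_box (M : nat) (c : 'I_m -> R) (t : R) (A : set T) :
  (0 < M)%N -> measurable A -> (forall w, A w -> t <= \sum_i c i * X i w) ->
  (P A <= (\sum_(k : {ffun 'I_m -> 'I_M.+1})
     expR (\sum_i (c i * grid M (k i) + `|c i| / M%:R) - t) *
     \prod_i cell_prob (X i) M (k i))%:E)%E.
Proof.
move=> M_gt0 mA HA.
pose wt (k : {ffun 'I_m -> 'I_M.+1}) := expR (\sum_i (c i * grid M (k i) + `|c i| / M%:R) - t).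
rewrite -sumEFin; under eq_bigr do rewrite EFinM -prob_cell_box.
rewrite -(integral_sum_indic P wt); last 2 first.
- by move=> k; exact: expR_ge0.
- exact: measurable_cell_box.
rewrite -[X in P X]setIT -integral_indic //; apply: ge0_le_integral => //.
- by apply/measurable_EFinP; exact: measurable_indic.
- by apply: measurable_sum_indic; exact: measurable_cell_box.
move=> x _; rewrite lee_fin indicE; have [xA|_] := boolP (x \in A); last first.
  by apply: sumr_ge0 => k _; rewrite mulr_ge0 ?expR_ge0 // indicE.
pose k0 : {ffun 'I_m -> 'I_M.+1} := [ffun i => cell_of M (X i x)].
have box_k0 : cell_box M k0 x.
  by move=> i _; rewrite /k0 ffunE; exact: cell_ofP.
have wt_k0 : 1 <= wt k0.
  apply: le_trans (expR_ge1Dx _); rewrite lerDl subr_ge0.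
  apply: le_trans (HA x (set_mem xA)) _; apply: ler_sum => i _.
  apply: ler_mul_add_abs; first by rewrite invr_ge0.
  by rewrite /k0 ffunE; exact: cell_grid_itv (cell_ofP M_gt0 (X01 i x)).
rewrite (bigD1 k0) //= indicE mem_set // mulr1 -[leLHS]addr0 lerD //.
by apply: sumr_ge0 => k _; rewrite mulr_ge0 ?expR_ge0 // indicE.
Qed.

(* The discretisation error [exp (2 C / M)] is at most [2] once [M > 4 C]. *)
Lemma chernoff_hoeffding (c : 'I_m -> R) (t : R) (A : set T) :
  measurable A -> (forall w, A w -> t <= \sum_i c i * X i w) ->
  (P A <= (2 * expR (- t + \sum_i (c i * mu + c i ^+ 2 / 8)))%:E)%E.
Proof.
move=> mA HA; set C := \sum_i `|c i|.
pose M := (Num.truncn (4 * C)).+1.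
have M_gt0 : (0 < M)%N by [].
have M_pos : 0 < M%:R :> R by rewrite ltr0n.
have CM : 2 * C / M%:R <= 1 / 2.
  by have : 4 * C < M%:R := truncnS_gt _; rewrite ler_pdivrMr //; lra.
apply: (le_trans (prob_le_sum_cell_box M c t A M_gt0 mA HA)).
rewrite lee_fin (sum_ffun_expR_prod (fun i j => c i * grid M j + `|c i| / M%:R)
  (fun i j => cell_prob (X i) M j)).
have mgf_factor i : \sum_j cell_prob (X i) M j * expR (c i * grid M j + `|c i| / M%:R)
    <= expR (c i * mu + c i ^+ 2 / 8 + 2 * (`|c i| / M%:R)).
  under eq_bigr do rewrite expRD mulrA.
  have cell_mgf := cell_mgf_le (X i) mu M M_gt0 (X01 i) (EX i) (c i).
  rewrite -mulr_suml; apply: le_trans (ler_wpM2r (expR_ge0 _) cell_mgf) _.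
  by rewrite -expRD ler_expR; lra.
have prod_mgf : \prod_i \sum_j cell_prob (X i) M j * expR (c i * grid M j + `|c i| / M%:R)
    <= \prod_i expR (c i * mu + c i ^+ 2 / 8 + 2 * (`|c i| / M%:R)).
  apply: ler_prod => i _; rewrite mgf_factor andbT.
  by apply: sumr_ge0 => j _; rewrite mulr_ge0 ?expR_ge0 ?cell_prob_ge0.
apply: le_trans (ler_wpM2l (expR_ge0 _) prod_mgf) _.
rewrite -expR_sum -expRD big_split /= -mulr_sumr -mulr_suml -/C addrA expRD mulrC.
by rewrite ler_wpM2r ?expR_ge0 // expR_le2 // mulrA.
Qed.

End Chernoff.

Section Pooled_means.
Variables (n N : nat) (X : 'I_(n + N) -> {RV P >-> R}) (mu a dd : R).
Hypotheses (n_gt0 : (0 < n)%N) (N_gt0 : (0 < N)%N) (indep : mutually_independent_RVs X).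
Hypotheses (X01 : forall i w, 0 <= X i w <= 1) (EX : forall i, ('E_P[X i] = mu%:E)%E).
Hypothesis dd_gt0 : 0 < dd.

Let Zbar w := n%:R^-1 * \sum_(t < n) X (lshift N t) w.
Let Ybar w := (\sum_(t < N) X (rshift n t) w) / N%:R.
Let Xbar w := (n%:R * Zbar w + \sum_(t < N) X (rshift n t) w) / (n + N)%:R.

Let n_pos : 0 < n%:R :> R. Proof. by rewrite ltr0n. Qed.
Let N_pos : 0 < N%:R :> R. Proof. by rewrite ltr0n. Qed.

Let XbarE w : Xbar w = (n%:R * Zbar w + N%:R * Ybar w) / (n%:R + N%:R).
Proof. by rewrite /Xbar /Ybar natrD [N%:R * _]mulrC divfK // lt0r_neq0. Qed.

Let measurable_Zbar : measurable_fun [set: T] Zbar.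
Proof. by apply: measurable_funM => //; apply: measurable_sum => t; exact: measurable_funPT. Qed.

Let measurable_Xbar : measurable_fun [set: T] Xbar.
Proof.
apply: measurable_funM => //; apply: measurable_funD; first exact: measurable_funM.
by apply: measurable_sum => t; exact: measurable_funPT.
Qed.

(* [lam] minimises the Chernoff exponent; the mean terms cancel. *)
Lemma pooled_mean_deviation (sg : R) (A : set T) : sg ^+ 2 = 1 -> measurable A ->
  (forall w, A w -> dd * (n + N)%:R / N%:R <= sg * (Ybar w - Zbar w)) ->
  (P A <= (2 * expR (- varphi R * dd ^+ 2 * n%:R))%:E)%E.
Proof.
move=> sg2 mA HA.
pose lam := 4 * dd * n%:R.
have lam0 : 0 <= lam by rewrite /lam !mulr_ge0 // ltW.
pose c (i : 'I_(n + N)) := if (i < n)%N then - (sg * lam) / n%:R else sg * lam / N%:R.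
have cZ t : c (lshift N t) = - (sg * lam) / n%:R by rewrite /c /= ltn_ord.
have cY t : c (rshift n t) = sg * lam / N%:R by rewrite /c /= ltnNge leq_addr.
apply: (le_trans (chernoff_hoeffding _ _ _ indep X01 EX c (lam * (dd * (n + N)%:R / N%:R)) A mA _)).
  move=> w Aw; rewrite big_split_ord /=.
  under eq_bigr do rewrite cZ.
  under [X in _ + X]eq_bigr do rewrite cY.
  rewrite -!mulr_sumr.
  have -> : - (sg * lam) / n%:R * (\sum_(t < n) X (lshift N t) w) +
      sg * lam / N%:R * (\sum_(t < N) X (rshift n t) w) = lam * (sg * (Ybar w - Zbar w)).
    by rewrite /Ybar /Zbar; ring.
  by apply: ler_wpM2l => //; exact: HA.
rewrite lee_fin ler_pM2l // ler_expR big_split_ord /=.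
under eq_bigr do rewrite cZ.
rewrite [\sum_(i < N) _](eq_bigr (fun=> sg * lam / N%:R * mu + (sg * lam / N%:R) ^+ 2 / 8));
  last by move=> i _; rewrite cY.
have sum_const (k : nat) (x : R) : \sum_(i < k) x = k%:R * x.
  by rewrite sumr_const card_ord mulr_natl.
rewrite !sum_const.
have -> : - (lam * (dd * (n + N)%:R / N%:R)) +
    (n%:R * (- (sg * lam) / n%:R * mu + (- (sg * lam) / n%:R) ^+ 2 / 8) +
     N%:R * (sg * lam / N%:R * mu + (sg * lam / N%:R) ^+ 2 / 8)) =
    - (2 * (dd ^+ 2 * n%:R)) - 2 * dd ^+ 2 * n%:R ^+ 2 / N%:R.
  rewrite !exprMn sqrrN !exprMn sg2 !mul1r /lam natrD.
  by field; rewrite !lt0r_neq0.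
have h1 : - (2 * (dd ^+ 2 * n%:R)) <= - varphi R * dd ^+ 2 * n%:R.
  rewrite -mulrA mulNr lerN2; apply: ler_wpM2r; last exact: varphi_le2.
  by rewrite mulr_ge0 ?sqr_ge0 ?ltW.
have h2 : 0 <= 2 * dd ^+ 2 * n%:R ^+ 2 / N%:R by rewrite divr_ge0 ?mulr_ge0 ?sqr_ge0 // ltW.
lra.
Qed.

Lemma pooled_mean_lower_tail :
  (P [set w | (Zbar w <= a - dd)%R /\ (a <= Xbar w)%R] <=
    (2 * expR (- varphi R * dd ^+ 2 * n%:R))%:E)%E.
Proof.
apply: (pooled_mean_deviation 1); first by rewrite expr1n.
  rewrite [X in measurable X](_ : _ =
    Zbar @^-1` `]-oo, a - dd] `&` Xbar @^-1` `[a, +oo[); last first.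
    by apply/seteqP; split => w /=; rewrite !in_itv /= ?andbT.
  by apply: measurableI; rewrite -[_ @^-1` _]setTI;
    [apply: measurable_Zbar | apply: measurable_Xbar].
move=> w [hz ha]; rewrite mul1r natrD.
by apply: (pooled_mean_gap n_pos N_pos hz); rewrite -XbarE.
Qed.

Lemma pooled_mean_upper_tail :
  (P [set w | (a + dd <= Zbar w)%R /\ (Xbar w <= a)%R] <=
    (2 * expR (- varphi R * dd ^+ 2 * n%:R))%:E)%E.
Proof.
apply: (pooled_mean_deviation (-1)); first by rewrite sqrrN expr1n.
  rewrite [X in measurable X](_ : _ =
    Zbar @^-1` `[a + dd, +oo[ `&` Xbar @^-1` `]-oo, a]); last first.
    by apply/seteqP; split => w /=; rewrite !in_itv /= ?andbT.
  by apply: measurableI; rewrite -[_ @^-1` _]setTI;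
    [apply: measurable_Zbar | apply: measurable_Xbar].
move=> w [hz ha]; rewrite natrD mulN1r opprD.
apply: (pooled_mean_gap n_pos N_pos (a := - a)); first by rewrite -opprD lerN2.
by rewrite !mulrN -opprD mulNr lerN2 -XbarE.
Qed.

End Pooled_means.

End Discretisation.

Theorem mainTheorem2 (d : measure_display) (T : measurableType d) (R : realType)
  (P : probability T R) (n N : nat) (X : 'I_(n + N) -> {RV P >-> R})
  (mu a dd : R) :
  (0 < n)%N -> (0 < N)%N ->
  mutually_independent_RVs X ->
  identically_distributed_RVs X ->
  (forall i w, 0 <= X i w <= 1) ->
  (forall i, ('E_P[X i] = mu%:E)%E) ->
  0 < dd ->
  let Z := fun t : 'I_n => X (lshift N t) in
  let Y := fun t : 'I_N => X (rshift n t) in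
  let Zbar := fun w => (n%:R)^-1 * \sum_(t < n) Z t w in
  let Xbar := fun w => (n%:R * Zbar w + \sum_(t < N) Y t w) / (n + N)%:R in
  [/\ (P [set w | (Zbar w <= a - dd)%R /\ (a <= Xbar w)%R]
        <= (2 * expR (- varphi R * dd ^+ 2 * n%:R))%:E)%E,
      (P [set w | (a + dd <= Zbar w)%R /\ (Xbar w <= a)%R]
        <= (2 * expR (- varphi R * dd ^+ 2 * n%:R))%:E)%E,
      (forall r : R, 0 <= r ->
         varphi R <= 2 * ((1 + r) / (1 + Num.sqrt r)) ^+ 2),
      (exists2 r : R, 0 <= r &
         varphi R = 2 * ((1 + r) / (1 + Num.sqrt r)) ^+ 2)
    & 137 / 100 < varphi R].
Proof.
move=> n_gt0 N_gt0 indep _ X01 EX dd_gt0 Z Y Zbar Xbar.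
split; [exact: pooled_mean_lower_tail | exact: pooled_mean_upper_tail |
        exact: varphi_le_ratio | exact: varphi_ratio_attained | exact: varphi_gt137].
Qed.
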